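(* Let $p,q$ be distinct atoms and $\varphi := \Box(p\land q)\to[\ddagger(p\land q)](\Box p\lor\Box q)$. Then $\varphi$ is true at every world of every model under the uniform semantics $\models_u$, but there is an $\mathsf{S5}$ model (relation an equivalence relation) and a world $w$ in it at which $\varphi$ is false under the dependent semantics $\models_d$. Consequently the logic of valid formulas under $\models_u$ differs from that under $\models_d$, and this remains so when both are restricted to the class of $\mathsf{S5}$ models.
   Context: Fix a countable non-empty set $\mathit{At}$ of atoms. Formulas are built from $\top$, atoms, $\lnot$, $\land$, $\Box$ and, for each propositional $\pi$, the operator $[\ddagger\pi]$. A model is $\mathcal{M}=\langle W,R,V\rangle$, $W\neq\varnothing$, $R\subseteq W\times W$, $V:\mathit{At}\to\mathcal{P}(W)$; both satisfaction relations $\models_u,\models_d$ interpret atoms, Booleans and $\Box$ in the standard Kripke way. A literal is an atom or its negation; a clause is a finite set $D$ of literals read as $\bigvee D$, tautological if it contains $p$ and $\lnot p$ for some $p$. For propositional $\pi$, $\mathcal{C}(\pi)$ is the set of non-tautological clauses $D$ with $\models\pi\to\bigvee D$ and no $D'\subsetneq D$ with $\models\pi\to\bigvee D'$. (E.g. $\mathcal{C}(p\land q)=\{\{p\},\{q\}\}$, $\mathcal{C}(\lnot(p\land q))=\{\{\lnot p,\lnot q\}\}$.) Uniform semantics: for non-tautological clauses $D_1,D_2$, $\mathcal{M}^{(D_1,D_2)}_u=\langle W',R',V'\rangle$ has $W'=W\times\{0,1,2\}$, $(w,i)R'(v,j)$ iff $wRv$, $(w,0)\in V'(p)$ iff $w\in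 V(p)$, and for $i\in\{1,2\}$: $(w,i)\in V'(p)$ iff $\lnot p\in D_i$, or $\{p,\lnot p\}\cap D_i=\varnothing$ and $w\in V(p)$. $\mathcal{M},w\models_u[\ddagger\pi]\psi$ iff for all $D_1\in\mathcal{C}(\pi)$, $D_2\in\mathcal{C}(\lnot\pi)$, $\mathcal{M}^{(D_1,D_2)}_u,(w,0)\models_u\psi$. Dependent semantics: for functions $f_1:W\to\mathcal{C}(\pi)$, $f_2:W\to\mathcal{C}(\lnot\pi)$, $\mathcal{M}^{(f_1,f_2)}_d=\langle W'',R'',V''\rangle$ has $W''=W\times\{0,1,2\}$, $(w,i)R''(v,j)$ iff $wRv$, $(w,0)\in V''(p)$ iff $w\in V(p)$, and for $i\in\{1,2\}$: $(w,i)\in V''(p)$ iff $\lnot p\in f_i(w)$, or $\{p,\lnot p\}\cap f_i(w)=\varnothing$ and $w\in V(p)$. $\mathcal{M},w\models_d[\ddagger\pi]\psi$ iff for all $f_1:W\to\mathcal{C}(\pi)$ and all $f_2:W\to\mathcal{C}(\lnot\pi)$, $\mathcal{M}^{(f_1,f_2)}_d,(w,0)\models_d\psi$. *)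

From HB Require Import structures.
From mathcomp Require Import all_boot.
From mathcomp Require Import finmap.
Set Implicit Arguments. Unset Strict Implicit. Unset Printing Implicit Defensive.
Local Open Scope fset_scope.

Section Syntax.
Variable At : countType.

Inductive pform : Type :=
| PTop : pform
| PAtom : At -> pform
| PNeg : pform -> pform
| PAnd : pform -> pform -> pform.

Inductive form : Type :=
| FTop : form
| FAtom : At -> form
| FNeg : form -> form
| FAnd : form -> form -> form
| FBox : form -> form
| FUpd : pform -> form -> form.

Definition FOr (a b : form) : form := FNeg (FAnd (FNeg a) (FNeg b)).
Definition FImp (a b : form) : form := FNeg (FAnd a (FNeg b)).

Fixpoint peval (v : At -> bool) (pi : pform) : bool :=
  match pi with
  | PTop => true
  | PAtom a => v a
  | PNeg x => ~~ peval v x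
  | PAnd x y => peval v x && peval v y
  end.

(* literals: (a, true) is the atom a, (a, false) is its negation ~a;
   clauses: finite sets of literals, read disjunctively *)
Definition clause := {fset (At * bool)}.

Definition lit_val (v : At -> bool) (l : At * bool) : bool :=
  if l.2 then v l.1 else ~~ v l.1.

Definition tautological (D : clause) : Prop :=
  exists a : At, (a, true) \in D /\ (a, false) \in D.

Definition entails_clause (pi : pform) (D : clause) : Prop :=
  forall v : At -> bool, peval v pi -> exists2 l, l \in D & lit_val v l.

Definition Cset (pi : pform) (D : clause) : Prop :=
  ~ tautological D /\ entails_clause pi D /\
  ~ (exists D' : clause, D' `<=` D /\ D' != D /\ entails_clause pi D').

Record model : Type := Model {
  world : Type;
  inh : inhabited world;
  rel : world -> world -> Prop;
  val : At -> world -> Prop }.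
Arguments inh : clear implicits.
Arguments rel : clear implicits.
Arguments val : clear implicits.

Definition S5 (M : model) : Prop :=
  (forall w, rel M w w) /\ (forall w v, rel M w v -> rel M v w) /\
  (forall w v u, rel M w v -> rel M v u -> rel M w u).

(* valuation of a copy (w,i), i in {1,2}, determined by clause D *)
Definition upd_val (D : clause) (V : At -> Prop) (a : At) : Prop :=
  (a, false) \in D \/ ((a, true) \notin D /\ (a, false) \notin D /\ V a).

Definition triple_inh (M : model) : inhabited (world M * 'I_3) :=
  match inh M with inhabits w => inhabits (w, ord0) end.

(* the updated model, given clause assignments g1 g2 (constant in the
   uniform semantics, world-dependent in the dependent semantics) *)
Definition upd_model (M : model) (g1 g2 : world M -> clause) : model :=
  @Model (world M * 'I_3) (triple_inh M)
    (fun x y => rel M x.1 y.1)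
    (fun a x =>
       if nat_of_ord x.2 == 0%N then val M a x.1
       else if nat_of_ord x.2 == 1%N then upd_val (g1 x.1) (fun b => val M b x.1) a
       else upd_val (g2 x.1) (fun b => val M b x.1) a).

Unset Implicit Arguments.
Fixpoint sat_u (phi : form) : forall M : model, world M -> Prop :=
  match phi with
  | FTop => fun M w => True
  | FAtom a => fun M w => val M a w
  | FNeg x => fun M w => ~ sat_u x M w
  | FAnd x y => fun M w => sat_u x M w /\ sat_u y M w
  | FBox x => fun M w => forall v, rel M w v -> sat_u x M v
  | FUpd pi x => fun M w =>
      forall D1 D2 : clause, Cset pi D1 -> Cset (PNeg pi) D2 ->
        sat_u x (@upd_model M (fun _ => D1) (fun _ => D2)) (w, ord0)
  end.

Fixpoint sat_d (phi : form) : forall M : model, world M -> Prop :=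
  match phi with
  | FTop => fun M w => True
  | FAtom a => fun M w => val M a w
  | FNeg x => fun M w => ~ sat_d x M w
  | FAnd x y => fun M w => sat_d x M w /\ sat_d y M w
  | FBox x => fun M w => forall v, rel M w v -> sat_d x M v
  | FUpd pi x => fun M w =>
      forall f1 f2 : world M -> clause,
        (forall u, Cset pi (f1 u)) -> (forall u, Cset (PNeg pi) (f2 u)) ->
        sat_d x (@upd_model M f1 f2) (w, ord0)
  end.

Set Implicit Arguments.
Definition valid_u (phi : form) : Prop := forall M w, sat_u phi M w.
Definition valid_d (phi : form) : Prop := forall M w, sat_d phi M w.
Definition S5valid_u (phi : form) : Prop := forall M w, S5 M -> sat_u phi M w.
Definition S5valid_d (phi : form) : Prop := forall M w, S5 M -> sat_d phi M w.

End Syntax.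
Arguments sat_u {At} phi M w.
Arguments sat_d {At} phi M w.

Definition phi9 (At : countType) (p q : At) : form At :=
  FImp (FBox (FAnd (FAtom p) (FAtom q)))
       (FUpd (PAnd (PAtom p) (PAtom q)) (FOr (FBox (FAtom p)) (FBox (FAtom q)))).

From Pilot Require Import Defs.
From mathcomp Require Import all_boot.
From mathcomp Require Import finmap.

Set Implicit Arguments.
Unset Strict Implicit.
Unset Printing Implicit Defensive.
Local Open Scope fset_scope.

(* Every clause of C(¬(p ∧ q)) contains ¬p and ¬q, and no clause of C(p ∧ q)
   contains both p and q.  Under the uniform semantics a single pair (D1, D2)
   is used at all worlds, so one of the atoms, say q, is never made false by D1
   and is made true by D2 in every copy: □(p ∧ q) then yields □q after the
   update.  The dependent semantics may choose D1 = {p} at one world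
   and D1 = {q} at another; in a two-world universal model this kills both
   □p and □q. *)

Section Clauses.
Variable At : countType.
Implicit Types (pi : pform At) (D : clause At).

Lemma tautological_fsubset D' D : D' `<=` D -> tautological D' -> tautological D.
Proof. by move=> sub [a [pa na]]; exists a; split; apply: (fsubsetP sub). Qed.

Definition falsifier D : At -> bool := fun a => (a, false) \in D.

Lemma lit_val_falsifier D l : ~ tautological D -> l \in D -> ~~ lit_val (falsifier D) l.
Proof.
move=> ntD; case: l => a [] lD; rewrite /lit_val /falsifier /=; last by rewrite lD.
by apply/negP => naD; apply: ntD; exists a.
Qed.

Lemma entails_clause_falsifier pi D :
  ~ tautological D -> entails_clause pi D -> ~~ peval (falsifier D) pi.
Proof.
move=> ntD piD; apply/negP => /piD [l lD].
by apply/negP; apply: lit_val_falsifier.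
Qed.

Lemma entails_clause_nand (p q : At) D :
  ~ tautological D -> entails_clause (PNeg (PAnd (PAtom p) (PAtom q))) D ->
  (p, false) \in D /\ (q, false) \in D.
Proof. by move=> ntD /(entails_clause_falsifier ntD); rewrite /= negbK => /andP. Qed.

Lemma Cset_intro pi D :
  ~ tautological D -> entails_clause pi D ->
  (forall D', D' `<=` D -> entails_clause pi D' -> D `<=` D') -> Cset pi D.
Proof.
move=> ntD piD minD; do 2!split => //.
by move=> [D' [sub [ne piD']]]; move/negP: ne; apply; rewrite eqEfsubset sub minD.
Qed.

Lemma Cset_atom pi a :
  (forall v, peval v pi -> v a) -> (exists v, peval v pi) -> Cset pi [fset (a, true)].
Proof.
move=> pi_a [v piv]; apply: Cset_intro.
- by move=> [b [_ /fset1P []]].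
- by move=> w /pi_a wa; exists (a, true); rewrite ?inE.
move=> D' sub /(_ v piv) [l lD' _].
by have /fset1P <- := fsubsetP sub l lD'; rewrite fsub1set.
Qed.

Lemma Cset_nand (p q : At) : Cset (PNeg (PAnd (PAtom p) (PAtom q))) [fset (p, false); (q, false)].
Proof.
apply: Cset_intro.
- by move=> [a [+ _]]; rewrite !inE => /orP [] /eqP [].
- move=> v /=; case vp: (v p) => /= nand_pq.
    by exists (q, false); rewrite /lit_val /= ?inE ?eqxx ?orbT.
  by exists (p, false); rewrite /lit_val /= ?inE ?eqxx ?vp.
move=> D' sub piD'.
have ntD' : ~ tautological D'.
  by move/(tautological_fsubset sub) => [a [+ _]]; rewrite !inE => /orP [] /eqP [].
have [pD' qD'] := entails_clause_nand ntD' piD'.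
by apply/fsubsetP => l; rewrite !inE => /orP [] /eqP ->.
Qed.

Lemma Cset_and_atoms p q D :
  p <> q -> Cset (PAnd (PAtom p) (PAtom q)) D -> (p, true) \in D -> (q, true) \notin D.
Proof.
move=> neq_pq [_ [_ minD]] pD; apply/negP => qD; apply: minD.
exists [fset (p, true)]; split; first by rewrite fsub1set.
split; last by move=> v /= /andP [vp _]; exists (p, true); rewrite ?inE.
by apply/eqP => E; move: qD; rewrite -E => /fset1P [] /esym.
Qed.

End Clauses.

Section Updates.
Variable At : countType.
Implicit Types (D : clause At) (V : At -> Prop).

Lemma upd_val_keep D V a : (a, true) \notin D -> V a -> upd_val D V a.
Proof.
move=> paD Va; rewrite /upd_val.
by case: (boolP ((a, false) \in D)) => naD; [left | right].
Qed.

Lemma upd_val_pos D V a : ~ tautological D -> (a, true) \in D -> ~ upd_val D V a.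
Proof. by move=> ntD paD [naD | [/negP]] //; apply: ntD; exists a. Qed.

Lemma val_upd_model (M : model At) (g1 g2 : world M -> clause At) a x :
  @Defs.val _ M a x.1 -> (a, true) \notin g1 x.1 -> (a, false) \in g2 x.1 ->
  @Defs.val _ (@upd_model _ M g1 g2) a x.
Proof.
case: x => v [[|[|i]] ltiv] /= Va paD1 naD2 //; first exact: upd_val_keep.
by left.
Qed.

End Updates.

Section Proposition9.
Variables (At : countType) (p q : At).
Hypothesis neq_pq : p <> q.

Lemma sat_u_phi9 (M : model At) (w : world M) : sat_u (phi9 p q) M w.
Proof.
move=> /= [box_pq]; apply => D1 D2 C1 [ntD2 [nandD2 _]] [not_box_p not_box_q].
have [npD2 nqD2] := entails_clause_nand ntD2 nandD2.
have box_upd a : (forall v, @Defs.rel _ M w v -> @Defs.val _ M a v) ->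
    (a, true) \notin D1 -> (a, false) \in D2 ->
    forall y, @Defs.rel _ M w y.1 -> @Defs.val _ (@upd_model _ M (fun=> D1) (fun=> D2)) a y.
  by move=> box_a aD1 aD2 y wy; apply: val_upd_model => //; apply: box_a.
have [pD1 | pD1] := boolP ((p, true) \in D1).
  apply: not_box_q; apply: box_upd nqD2; last exact: Cset_and_atoms C1 pD1.
  by move=> v /box_pq [].
by apply: not_box_p; apply: box_upd npD2 => // v /box_pq [].
Qed.

Definition two_point_model : model At :=
  @Model At bool (inhabits true) (fun _ _ => True) (fun _ _ => True).

Lemma S5_two_point_model : S5 two_point_model.
Proof. by []. Qed.

Lemma two_point_model_refutes_phi9_d : ~ sat_d (phi9 p q) two_point_model true.
Proof.
have sat_pq : exists v, peval v (PAnd (PAtom p) (PAtom q)) by exists (fun=> true).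
have C1 (b : bool) : Cset (PAnd (PAtom p) (PAtom q))
    (if b then [fset (p, true)] else [fset (q, true)]).
  by case: b; apply: Cset_atom sat_pq => v /andP [].
move=> /=; apply; split=> // /(_ _ _ C1 (fun=> Cset_nand p q)) /=; apply.
have ntC1 b := (C1 b).1.
split=> [/(_ (true, inord 1) I) | /(_ (false, inord 1) I)] /=; rewrite inordK //=.
- by apply: upd_val_pos (ntC1 true) _; rewrite inE.
- by apply: upd_val_pos (ntC1 false) _; rewrite inE.
Qed.

End Proposition9.

Theorem proposition9 (At : countType) (p q : At) (hpq : p <> q) :
  (forall (M : model At) (w : world M), sat_u (phi9 p q) M w) /\
  (exists (M : model At) (w : world M), S5 M /\ ~ sat_d (phi9 p q) M w) /\
  ~ (forall phi : form At, valid_u phi <-> valid_d phi) /\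
  ~ (forall phi : form At, S5valid_u phi <-> S5valid_d phi).
Proof.
have valid_phi9 := sat_u_phi9 hpq.
have refuted := @two_point_model_refutes_phi9_d At p q.
have S5M := @S5_two_point_model At.
split; first exact: valid_phi9.
split; first by exists (two_point_model At), true.
split.
  move=> /(_ (phi9 p q)) [/(_ valid_phi9) valid_d_phi9 _].
  exact: refuted (valid_d_phi9 _ _).
move=> /(_ (phi9 p q)) [/(_ (fun M w _ => valid_phi9 M w)) S5valid_d_phi9 _].
exact: refuted (S5valid_d_phi9 _ _ S5M).
Qed.
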